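(* Let $\Phi:[a,b]\to\mathbb{R}$ be continuous and nowhere zero, let $a\le x_0\le b$, and suppose that $f(x),\mathcal Y_0(x_0,x),\mathcal Y_1(x_0,x),\dots,\mathcal Y_n(x_0,x)$ are real-valued functions of class $C^{n+1}$ on $[a,b]$. Then for $x\in[a,b]$ $$f(x)=\sum_{k=0}^n\frac{\mathcal D_kf(x_0)}{k!}\,\mathcal Y_k(x_0,x)+R_n(x),$$ where $\mathcal D_kf=\widetilde D^{(k)}f$ for $k$ odd, $\mathcal D_kf=D^{(k)}f$ for $k$ even, and $$R_n(x)=\frac{1}{n!}\int_{x_0}^x\big[\Phi(\xi)\big]^{(-1)^n}\,\mathcal Y_n(\xi,x)\,\mathcal D_{n+1}f(\xi)\,d\xi.$$
   Context: For $s,x\in[a,b]$ the $\Phi$-power functions are defined recursively by $X^{(0)}(s,x)\equiv 1$, $\widetilde X^{(0)}(s,x)\equiv 1$ and, for $n\ge 1$, $$X^{(n)}(s,x)=n\int_{s}^x X^{(n-1)}(s,\xi)\,\big(\Phi(\xi)\big)^{(-1)^n}\,d\xi,\qquad \widetilde X^{(n)}(s,x)=n\int_{s}^x \widetilde X^{(n-1)}(s,\xi)\,\Big(\frac{1}{\Phi(\xi)}\Big)^{(-1)^n}\,d\xi.$$ For $n\ge0$, $\mathcal Y_n=\widetilde X^{(n)}$ if $n$ is odd and $\mathcal Y_n=X^{(n)}$ if $n$ is even. The $\Phi$-derivatives are $Dh=\Phi\,h'$, $\widetilde Dh=\frac1\Phi h'$, with $D^{(0)}h=\widetilde D^{(0)}h=h$,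 $D^{(k)}h=D(\widetilde D^{(k-1)}h)$, $\widetilde D^{(k)}h=\widetilde D(D^{(k-1)}h)$ for $k\ge1$. In this part of the paper $\Phi$ is assumed real-valued. *)

From Stdlib Require Import Reals Factorial ClassicalEpsilon.
From Coquelicot Require Import Coquelicot.
Open Scope R_scope.

Definition is_deriv_on (a b : R) (f : R -> R) (x l : R) : Prop :=
  filterlim (fun y => (f y - f x) / (y - x))
    (within (fun y => a <= y <= b /\ y <> x) (locally x)) (locally l).

(* the derivative relative to [a,b] (an arbitrary value where it does not exist) *)
Definition deriv_on (a b : R) (f : R -> R) (x : R) : R :=
  epsilon (inhabits 0) (fun l => is_deriv_on a b f x l).

Definition cont_on (a b : R) (f : R -> R) : Prop :=
  forall x, a <= x <= b ->
    filterlim f (within (fun y => a <= y <= b) (locally x)) (locally (f x)).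

Fixpoint Ck_on (a b : R) (k : nat) (f : R -> R) : Prop :=
  match k with
  | O => cont_on a b f
  | S m => (forall x, a <= x <= b -> exists l, is_deriv_on a b f x l)
           /\ Ck_on a b m (deriv_on a b f)
  end.

Fixpoint Xpow (Phi : R -> R) (n : nat) (s x : R) : R :=
  match n with
  | O => 1
  | S m => INR (S m) *
      RInt (fun xi => Xpow Phi m s xi *
                      (if Nat.even (S m) then Phi xi else / Phi xi)) s x
  end.

Fixpoint Xtpow (Phi : R -> R) (n : nat) (s x : R) : R :=
  match n with
  | O => 1
  | S m => INR (S m) *
      RInt (fun xi => Xtpow Phi m s xi *
                      (if Nat.even (S m) then / Phi xi else Phi xi)) s x
  end.

Definition Ypow (Phi : R -> R) (n : nat) (s x : R) : R :=
  if Nat.odd n then Xtpow Phi n s x else Xpow Phi n s x.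

Definition Dphi (a b : R) (Phi h : R -> R) : R -> R :=
  fun x => Phi x * deriv_on a b h x.
Definition Dtphi (a b : R) (Phi h : R -> R) : R -> R :=
  fun x => deriv_on a b h x / Phi x.

Fixpoint DDpair (a b : R) (Phi : R -> R) (k : nat) (h : R -> R) : (R -> R) * (R -> R) :=
  match k with
  | O => (h, h)
  | S m => let p := DDpair a b Phi m h in
           (Dphi a b Phi (snd p), Dtphi a b Phi (fst p))
  end.

Definition Dk_plain (a b : R) (Phi : R -> R) (k : nat) (h : R -> R) : R -> R :=
  fst (DDpair a b Phi k h).
Definition Dk_tilde (a b : R) (Phi : R -> R) (k : nat) (h : R -> R) : R -> R :=
  snd (DDpair a b Phi k h).

Definition calD (a b : R) (Phi : R -> R) (k : nat) (h : R -> R) : R -> R :=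
  if Nat.odd k then Dk_tilde a b Phi k h else Dk_plain a b Phi k h.

Definition phipow (Phi : R -> R) (n : nat) (xi : R) : R :=
  if Nat.even n then Phi xi else / Phi xi.

Definition Rem (a b : R) (Phi f : R -> R) (n : nat) (x0 x : R) : R :=
  / INR (fact n) *
  RInt (fun xi => phipow Phi n xi * Ypow Phi n xi x * calD a b Phi (S n) f xi) x0 x.

(* Write Y_k(s, x) = k! Q_k(s, x), where Q_k(s, x) is the iterated integral over
   s < u_1 < ... < u_k < x of alternating weights Phi^{+-1}.  For fixed x the function
     g(xi) = sum_{k <= n} D_k f(xi) Q_k(xi, x)
   equals f(x) at xi = x and the Taylor sum at xi = x0.  Since
   (D_k f)' = Phi^{(-1)^k} D_{k+1} f and d/dxi Q_{k+1}(xi, x) = - Phi^{(-1)^k}(xi) Q_k(xi, x),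
   the derivative of g telescopes to Phi^{(-1)^n} D_{n+1} f Q_n(xi, x), and the fundamental
   theorem of calculus gives the remainder.

   The delicate point is the derivative of an iterated integral in its lower limit s.  It
   follows from Chen's identity Q_n(s, x) = sum_j B_j(s) Q'_{n-j}(c, x), which cuts the simplex
   at a fixed point c: the B_j are iterated integrals from s to c unfolded at their lower end,
   hence differentiable in s.  The identity is proved by differentiating in x; on the diagonal
   x = s the sum has zero derivative (by induction on n), so it vanishes there as it does at c. *)

From Stdlib Require Import Reals Factorial ClassicalEpsilon Lra Lia.
From Coquelicot Require Import Coquelicot.
Open Scope R_scope.

Lemma filterlim_within_limit1_in (g : R -> R) (D : R -> Prop) (x l : R) :
  filterlim g (within D (locally x)) (locally l) <-> limit1_in g D l x.
Proof.
  rewrite filterlim_locally; unfold limit1_in, limit_in, within; simpl; unfold Rdist.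
  split.
  - intros H eps Heps. destruct (H (mkposreal eps Heps)) as [d Hd].
    exists d; split; [apply cond_pos |]. intros y [Dy Hy]. exact (Hd y Hy Dy).
  - intros H eps. destruct (H eps (cond_pos eps)) as [d [Hd0 Hd]].
    exists (mkposreal d Hd0). intros y Hy Dy. apply Hd. split; [exact Dy | exact Hy].
Qed.

Lemma limit1_in_add_point (g : R -> R) (D : R -> Prop) (x : R) :
  limit1_in g (D_x D x) (g x) x -> limit1_in g D (g x) x.
Proof.
  unfold limit1_in, limit_in, D_x; simpl; unfold Rdist.
  intros H eps Heps. destruct (H eps Heps) as [d [Hd Hg]].
  exists d; split; [exact Hd |]. intros y [Dy Hy].
  destruct (Req_dec x y) as [<- | Hxy].
  - rewrite Rminus_diag, Rabs_R0. exact Heps.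
  - apply Hg. auto.
Qed.

Lemma limit1_in_local (g : R -> R) (D D' : R -> Prop) (l x r : R) :
  0 < r -> (forall y, D' y -> Rabs (y - x) < r -> D y) ->
  limit1_in g D l x -> limit1_in g D' l x.
Proof.
  unfold limit1_in, limit_in; simpl; unfold Rdist.
  intros Hr HD H eps Heps. destruct (H eps Heps) as [d [Hd Hg]].
  exists (Rmin d r); split; [apply Rmin_glb_lt; assumption |].
  intros y [Dy Hy]. apply Hg. split.
  - apply HD; [exact Dy | apply (Rlt_le_trans _ _ _ Hy), Rmin_r].
  - apply (Rlt_le_trans _ _ _ Hy), Rmin_l.
Qed.

Lemma RInt_Rmult_l (k : R) (g : R -> R) (s x : R) : ex_RInt g s x ->
  RInt (fun y => k * g y) s x = k * RInt g s x.
Proof. exact (RInt_scal g s x k). Qed.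

Section segment.

Variables a b : R.

Local Notation seg := (fun y : R => a <= y <= b).

(** * Derivatives and continuity relative to [a, b] *)

Lemma is_deriv_on_D_in (f : R -> R) (x l : R) :
  is_deriv_on a b f x l <-> D_in f (fun _ => l) seg x.
Proof.
  unfold is_deriv_on, D_in, D_x. rewrite filterlim_within_limit1_in.
  split; apply limit1_imp; intros y [Hy Hne]; auto.
Qed.

Lemma cont_on_limit1_in (f : R -> R) :
  cont_on a b f <-> forall x, a <= x <= b -> limit1_in f seg (f x) x.
Proof. unfold cont_on. setoid_rewrite filterlim_within_limit1_in. reflexivity. Qed.

Lemma is_deriv_on_eq (f : R -> R) (x l l' : R) :
  is_deriv_on a b f x l -> l = l' -> is_deriv_on a b f x l'.
Proof. intros H <-. exact H. Qed.

Lemma is_deriv_on_ext (f g : R -> R) (x l : R) : a <= x <= b ->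
  (forall y, a <= y <= b -> f y = g y) -> is_deriv_on a b f x l -> is_deriv_on a b g x l.
Proof.
  intros Hx E. rewrite !is_deriv_on_D_in. apply limit1_ext.
  intros y [Hy _]. rewrite !E; auto.
Qed.

Lemma is_deriv_on_const (c x : R) : is_deriv_on a b (fun _ => c) x 0.
Proof. apply is_deriv_on_D_in, Dconst. Qed.

Lemma is_deriv_on_plus (f g : R -> R) (x lf lg : R) :
  is_deriv_on a b f x lf -> is_deriv_on a b g x lg ->
  is_deriv_on a b (fun y => f y + g y) x (lf + lg).
Proof. rewrite !is_deriv_on_D_in. apply Dadd. Qed.

Lemma is_deriv_on_opp (f : R -> R) (x l : R) :
  is_deriv_on a b f x l -> is_deriv_on a b (fun y => - f y) x (- l).
Proof. rewrite !is_deriv_on_D_in. apply Dopp. Qed.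

Lemma is_deriv_on_mult (f g : R -> R) (x lf lg : R) :
  is_deriv_on a b f x lf -> is_deriv_on a b g x lg ->
  is_deriv_on a b (fun y => f y * g y) x (lf * g x + f x * lg).
Proof. rewrite !is_deriv_on_D_in. apply Dmult. Qed.

Lemma is_deriv_on_scal (k : R) (f : R -> R) (x l : R) :
  is_deriv_on a b f x l -> is_deriv_on a b (fun y => k * f y) x (k * l).
Proof. rewrite !is_deriv_on_D_in. apply Dmult_const. Qed.

Lemma is_deriv_on_inv (f : R -> R) (x l : R) : f x <> 0 ->
  is_deriv_on a b f x l -> is_deriv_on a b (fun y => / f y) x (- l / f x ^ 2).
Proof.
  intros Hfx Hf. apply (is_deriv_on_eq _ _ (l * (- 1 / f x ^ 2))); [| field; exact Hfx].
  apply is_deriv_on_D_in in Hf. apply is_deriv_on_D_in.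
  assert (Hinv : D_in (fun y => / y) (fun y => - 1 / y ^ 2) no_cond (f x)).
  { apply derivable_pt_lim_D_in, is_derive_Reals.
    exact (is_derive_inv (fun y => y) (f x) 1 (is_derive_id _) Hfx). }
  apply (D_in_imp _ _ (Dgf seg no_cond f)); [intros y Hy; split; [exact Hy | exact I] |].
  exact (Dcomp _ _ _ _ _ _ _ Hf Hinv).
Qed.

Lemma is_deriv_on_sum (F : nat -> R -> R) (l : nat -> R) (n : nat) (x : R) :
  (forall k, (k <= n)%nat -> is_deriv_on a b (F k) x (l k)) ->
  is_deriv_on a b (fun y => sum_f_R0 (fun k => F k y) n) x (sum_f_R0 l n).
Proof.
  induction n as [| n IH]; intros HF; cbn [sum_f_R0].
  - apply HF. lia.
  - apply is_deriv_on_plus; [apply IH; intros k Hk |]; apply HF; lia.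
Qed.

Lemma is_deriv_on_limit1_in (f : R -> R) (x l : R) :
  is_deriv_on a b f x l -> limit1_in f seg (f x) x.
Proof.
  rewrite is_deriv_on_D_in. intros H. exact (limit1_in_add_point _ _ _ (cont_deriv _ _ _ _ H)).
Qed.

Lemma cont_on_of_deriv (f : R -> R) :
  (forall x, a <= x <= b -> exists l, is_deriv_on a b f x l) -> cont_on a b f.
Proof.
  intros H. apply cont_on_limit1_in. intros x Hx.
  destruct (H x Hx) as [l Hl]. exact (is_deriv_on_limit1_in _ _ _ Hl).
Qed.

Lemma cont_on_const (c : R) : cont_on a b (fun _ => c).
Proof. apply cont_on_limit1_in. intros x _. exact (limit_free (fun _ => c) _ x x). Qed.

Lemma cont_on_plus (f g : R -> R) :
  cont_on a b f -> cont_on a b g -> cont_on a b (fun y => f y + g y).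
Proof. rewrite !cont_on_limit1_in. intros Hf Hg x Hx. apply limit_plus; auto. Qed.

Lemma cont_on_mult (f g : R -> R) :
  cont_on a b f -> cont_on a b g -> cont_on a b (fun y => f y * g y).
Proof. rewrite !cont_on_limit1_in. intros Hf Hg x Hx. apply limit_mul; auto. Qed.

Lemma cont_on_inv (f : R -> R) : (forall y, a <= y <= b -> f y <> 0) ->
  cont_on a b f -> cont_on a b (fun y => / f y).
Proof. rewrite !cont_on_limit1_in. intros Hnz Hf x Hx. apply limit_inv; auto. Qed.

Lemma cont_on_ext (f g : R -> R) :
  (forall y, a <= y <= b -> f y = g y) -> cont_on a b f -> cont_on a b g.
Proof.
  rewrite !cont_on_limit1_in. intros E Hf x Hx. rewrite <- E by exact Hx.
  apply (limit1_ext f); [exact E | exact (Hf x Hx)].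
Qed.

Lemma deriv_on_spec (f : R -> R) (x : R) :
  (exists l, is_deriv_on a b f x l) -> is_deriv_on a b f x (deriv_on a b f x).
Proof. exact (epsilon_spec (inhabits 0) (is_deriv_on a b f x)). Qed.

Hypothesis ab_lt : a < b.

Lemma adhDa_seg (x : R) : a <= x <= b -> adhDa (D_x seg x) x.
Proof.
  intros Hx alp Halp. unfold D_x, Rdist.
  set (d := Rmin (alp / 2) ((b - a) / 2)).
  assert (Hd : 0 < d) by (apply Rmin_glb_lt; lra).
  assert (Hd1 := Rmin_l (alp / 2) ((b - a) / 2)).
  assert (Hd2 := Rmin_r (alp / 2) ((b - a) / 2)).
  fold d in Hd1, Hd2.
  destruct (Rle_lt_dec x ((a + b) / 2)).
  - exists (x + d). replace (x + d - x) with d by ring.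
    rewrite Rabs_pos_eq; repeat split; lra.
  - exists (x - d). replace (x - d - x) with (- d) by ring.
    rewrite Rabs_Ropp, Rabs_pos_eq; repeat split; lra.
Qed.

Lemma deriv_on_unique (f : R -> R) (x l : R) :
  a <= x <= b -> is_deriv_on a b f x l -> deriv_on a b f x = l.
Proof.
  intros Hx H. assert (Hs := deriv_on_spec f x (ex_intro _ l H)).
  rewrite is_deriv_on_D_in in H, Hs.
  exact (single_limit _ _ _ _ _ (adhDa_seg x Hx) Hs H).
Qed.

(** * The fundamental theorem of calculus on [a, b] *)

(* [clamp] extends a function continuous on [a, b] to one continuous on R, to which the
   fundamental theorem and the mean value theorem of Coquelicot apply. *)
Definition clamp (y : R) : R := Rmin b (Rmax a y).

Lemma clamp_id (y : R) : a <= y <= b -> clamp y = y.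
Proof. intros. unfold clamp, Rmin, Rmax. repeat destruct Rle_dec; lra. Qed.

Lemma clamp_in (y : R) : a <= clamp y <= b.
Proof. unfold clamp, Rmin, Rmax. repeat destruct Rle_dec; lra. Qed.

Lemma clamp_lipschitz (y z : R) : Rabs (clamp y - clamp z) <= Rabs (y - z).
Proof. unfold clamp, Rmin, Rmax, Rabs. repeat destruct Rle_dec; repeat destruct Rcase_abs; lra. Qed.

Lemma continuity_pt_clamp (u : R -> R) (z : R) :
  cont_on a b u -> continuity_pt (fun y => u (clamp y)) z.
Proof.
  rewrite cont_on_limit1_in. intros Hu.
  assert (Hz := Hu (clamp z) (clamp_in z)).
  unfold continuity_pt, continue_in, limit1_in, limit_in in *; simpl in *; unfold Rdist in *.
  intros eps Heps. destruct (Hz eps Heps) as [d [Hd Hlim]].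
  exists d; split; [exact Hd |]. intros y [_ Hy]. apply Hlim. split; [apply clamp_in |].
  exact (Rle_lt_trans _ _ _ (clamp_lipschitz y z) Hy).
Qed.

Lemma seg_between (s x z : R) : a <= s <= b -> a <= x <= b ->
  Rmin s x <= z <= Rmax s x -> a <= z <= b.
Proof. unfold Rmin, Rmax. destruct Rle_dec; lra. Qed.

Lemma ex_RInt_on (h : R -> R) (s x : R) : cont_on a b h ->
  a <= s <= b -> a <= x <= b -> ex_RInt h s x.
Proof.
  intros Hh Hs Hx. apply (ex_RInt_ext (fun y => h (clamp y))).
  - intros z Hz. rewrite clamp_id; [reflexivity |].
    apply (seg_between s x); [exact Hs | exact Hx | lra].
  - apply (@ex_RInt_continuous R_CompleteNormedModule). intros z _.
    apply continuity_pt_filterlim, continuity_pt_clamp, Hh.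
Qed.

Lemma is_deriv_on_derivable_pt_lim (f : R -> R) (x l : R) :
  derivable_pt_lim f x l -> is_deriv_on a b f x l.
Proof.
  rewrite <- (derivable_pt_lim_D_in f (fun _ => l)), is_deriv_on_D_in.
  apply D_in_imp. intros y _. exact I.
Qed.

Lemma derivable_pt_lim_interior (f : R -> R) (x l : R) :
  a < x < b -> is_deriv_on a b f x l -> derivable_pt_lim f x l.
Proof.
  rewrite is_deriv_on_D_in. intros Hx H.
  apply (derivable_pt_lim_D_in f (fun _ => l)).
  apply (limit1_in_local _ (D_x seg x) _ _ _ (Rmin (x - a) (b - x)));
    [apply Rmin_glb_lt; lra | | exact H].
  intros y [_ Hne] Hy. split; [| exact Hne].
  assert (H1 := Rmin_l (x - a) (b - x)). assert (H2 := Rmin_r (x - a) (b - x)).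
  apply Rabs_def2 in Hy. lra.
Qed.

Lemma is_deriv_on_RInt (h : R -> R) (c x : R) : cont_on a b h ->
  a <= c <= b -> a <= x <= b -> is_deriv_on a b (fun t => RInt h c t) x (h x).
Proof.
  intros Hh Hc Hx.
  set (hc := fun y => h (clamp y)).
  assert (Hcont : forall z, continuous hc z).
  { intros z. apply continuity_pt_filterlim, continuity_pt_clamp, Hh. }
  assert (D : is_derive (fun t => RInt hc c t) x (hc x)).
  { apply (is_derive_RInt hc _ c x); [| apply Hcont].
    apply filter_forall. intros t.
    apply (@RInt_correct R_CompleteNormedModule), (@ex_RInt_continuous R_CompleteNormedModule).
    intros; apply Hcont. }
  apply is_derive_Reals, is_deriv_on_derivable_pt_lim in D.
  unfold hc in D at 2. rewrite clamp_id in D by exact Hx.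
  apply (is_deriv_on_ext (fun t => RInt hc c t) _ _ _ Hx); [| exact D].
  intros t Ht. apply RInt_ext. intros z Hz. unfold hc. rewrite clamp_id; [reflexivity |].
  apply (seg_between c t); [exact Hc | exact Ht | lra].
Qed.

Lemma is_deriv_on_RInt_lower (h : R -> R) (c x : R) : cont_on a b h ->
  a <= c <= b -> a <= x <= b -> is_deriv_on a b (fun t => RInt h t c) x (- h x).
Proof.
  intros Hh Hc Hx. apply (is_deriv_on_ext (fun t => - RInt h c t) _ _ _ Hx).
  - intros t Ht. apply (opp_RInt_swap h c t), ex_RInt_on; assumption.
  - apply is_deriv_on_opp, is_deriv_on_RInt; assumption.
Qed.

Lemma is_deriv_on_zero_const (u : R -> R) :
  (forall y, a <= y <= b -> is_deriv_on a b u y 0) ->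
  forall s x, a <= s <= b -> a <= x <= b -> u x = u s.
Proof.
  intros Hu s x Hs Hx.
  assert (Cu : cont_on a b u) by (apply cont_on_of_deriv; intros y Hy; exists 0; auto).
  destruct (MVT_gen (fun y => u (clamp y)) s x (fun _ => 0)) as [c [_ E]].
  - intros z Hz. apply is_derive_Reals.
    assert (Hz' : a < z < b) by (revert Hz; unfold Rmin, Rmax; destruct Rle_dec; lra).
    apply derivable_pt_lim_interior; [exact Hz' |].
    apply (is_deriv_on_ext u); [lra | | apply Hu; lra].
    intros y Hy. rewrite clamp_id; auto.
  - intros z _. apply continuity_pt_clamp, Cu.
  - rewrite !clamp_id in E by assumption. lra.
Qed.

Lemma RInt_deriv_on (g h : R -> R) (s x : R) :
  (forall y, a <= y <= b -> is_deriv_on a b g y (h y)) -> cont_on a b h ->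
  a <= s <= b -> a <= x <= b -> RInt h s x = g x - g s.
Proof.
  intros Hg Hh Hs Hx.
  assert (E : g x - RInt h s x = g s - RInt h s s).
  { apply (is_deriv_on_zero_const (fun t => g t - RInt h s t)); [| exact Hs | exact Hx].
    intros y Hy. apply (is_deriv_on_eq _ _ (h y + - h y)); [| ring].
    apply is_deriv_on_plus; [auto | apply is_deriv_on_opp, is_deriv_on_RInt; assumption]. }
  rewrite RInt_point in E. change zero with 0 in E. lra.
Qed.

Lemma Ck_on_is_deriv_on (k : nat) (f : R -> R) (x : R) : a <= x <= b ->
  Ck_on a b (S k) f -> is_deriv_on a b f x (deriv_on a b f x).
Proof. intros Hx [Hf _]. apply deriv_on_spec, Hf, Hx. Qed.

Lemma Ck_on_deriv_on (k : nat) (f : R -> R) :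
  Ck_on a b (S k) f -> Ck_on a b k (deriv_on a b f).
Proof. intros [_ Hf]. exact Hf. Qed.

Lemma Ck_on_weaken (k : nat) (f : R -> R) : Ck_on a b (S k) f -> Ck_on a b k f.
Proof.
  revert f. induction k as [| k IH]; intros f [Hf Hdf].
  - apply cont_on_of_deriv, Hf.
  - split; [exact Hf | apply IH, Hdf].
Qed.

Lemma Ck_on_le (j k : nat) (f : R -> R) : (j <= k)%nat -> Ck_on a b k f -> Ck_on a b j f.
Proof. induction 1; [auto | intros Hf; apply IHle, Ck_on_weaken, Hf]. Qed.

Lemma Ck_on_cont (k : nat) (f : R -> R) : Ck_on a b k f -> cont_on a b f.
Proof. intros Hf. apply (Ck_on_le 0 k); [lia | exact Hf]. Qed.

Lemma Ck_on_ext (k : nat) (f g : R -> R) :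
  (forall y, a <= y <= b -> f y = g y) -> Ck_on a b k f -> Ck_on a b k g.
Proof.
  revert f g. induction k as [| k IH]; intros f g E Hf.
  - exact (cont_on_ext f g E Hf).
  - destruct Hf as [Hd Hdf]. split.
    + intros x Hx. destruct (Hd x Hx) as [l Hl]. exists l. exact (is_deriv_on_ext f g x l Hx E Hl).
    + apply (IH (deriv_on a b f)); [| exact Hdf]. intros y Hy. symmetry.
      apply deriv_on_unique; [exact Hy |].
      apply (is_deriv_on_ext f); [exact Hy | exact E | apply deriv_on_spec, Hd, Hy].
Qed.

Lemma Ck_on_S_intro (k : nat) (f df : R -> R) :
  (forall y, a <= y <= b -> is_deriv_on a b f y (df y)) -> Ck_on a b k df -> Ck_on a b (S k) f.
Proof.
  intros Hf Hdf. split.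
  - intros x Hx. exists (df x). exact (Hf x Hx).
  - apply (Ck_on_ext k df); [| exact Hdf]. intros y Hy. symmetry.
    exact (deriv_on_unique f y _ Hy (Hf y Hy)).
Qed.

Lemma Ck_on_const (k : nat) (c : R) : Ck_on a b k (fun _ => c).
Proof.
  revert c. induction k as [| k IH]; intros c; [apply cont_on_const |].
  apply (Ck_on_S_intro k _ (fun _ => 0)); [intros; apply is_deriv_on_const | apply IH].
Qed.

Lemma Ck_on_plus (k : nat) (f g : R -> R) :
  Ck_on a b k f -> Ck_on a b k g -> Ck_on a b k (fun y => f y + g y).
Proof.
  revert f g. induction k as [| k IH]; intros f g Hf Hg.
  - apply cont_on_plus; assumption.
  - apply (Ck_on_S_intro k _ (fun y => deriv_on a b f y + deriv_on a b g y)).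
    + intros y Hy. apply is_deriv_on_plus; eapply Ck_on_is_deriv_on; eassumption.
    + apply IH; apply Ck_on_deriv_on; assumption.
Qed.

Lemma Ck_on_mult (k : nat) (f g : R -> R) :
  Ck_on a b k f -> Ck_on a b k g -> Ck_on a b k (fun y => f y * g y).
Proof.
  revert f g. induction k as [| k IH]; intros f g Hf Hg.
  - apply cont_on_mult; assumption.
  - apply (Ck_on_S_intro k _ (fun y => deriv_on a b f y * g y + f y * deriv_on a b g y)).
    + intros y Hy. apply is_deriv_on_mult; eapply Ck_on_is_deriv_on; eassumption.
    + apply Ck_on_plus; apply IH; auto using Ck_on_deriv_on, Ck_on_weaken.
Qed.

Lemma Ck_on_inv (k : nat) (f : R -> R) : (forall y, a <= y <= b -> f y <> 0) ->
  Ck_on a b k f -> Ck_on a b k (fun y => / f y).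
Proof.
  intros Hnz. revert f Hnz. induction k as [| k IH]; intros f Hnz Hf.
  - apply cont_on_inv; assumption.
  - apply (Ck_on_S_intro k _ (fun y => - deriv_on a b f y / f y ^ 2)).
    + intros y Hy. apply is_deriv_on_inv; [auto | eapply Ck_on_is_deriv_on; eassumption].
    + apply (Ck_on_ext k (fun y => -1 * (deriv_on a b f y * (/ f y * / f y)))).
      * intros y Hy. field. auto.
      * assert (Hinv : Ck_on a b k (fun y => / f y)) by (apply IH, Ck_on_weaken; assumption).
        apply Ck_on_mult; [apply Ck_on_const |].
        apply Ck_on_mult; [apply Ck_on_deriv_on, Hf | apply Ck_on_mult; exact Hinv].
Qed.

(** * Iterated integrals *)

Definition shift (w : nat -> R -> R) (j : nat) : nat -> R -> R := fun k => w (j + k)%nat.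

(* [iint w n s x] is the integral of w_0(u_1) ... w_(n-1)(u_n) over s < u_1 < ... < u_n < x,
   unfolded at its upper end; [iint_rev w n c s] is the same integral over
   s < u_1 < ... < u_n < c unfolded at its lower end, hence differentiable in s. *)
Fixpoint iint (w : nat -> R -> R) (n : nat) (s x : R) : R :=
  match n with
  | O => 1
  | S m => RInt (fun y => iint w m s y * w m y) s x
  end.

Fixpoint iint_rev (w : nat -> R -> R) (n : nat) (c s : R) : R :=
  match n with
  | O => 1
  | S m => RInt (fun u => w O u * iint_rev (shift w 1) m c u) s c
  end.

Definition iint_dx (w : nat -> R -> R) (n : nat) (s x : R) : R :=
  match n with
  | O => 0
  | S m => iint w m s x * w m x
  end.

Definition iint_rev_ds (w : nat -> R -> R) (n : nat) (c s : R) : R :=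
  match n with
  | O => 0
  | S m => - (w O s * iint_rev (shift w 1) m c s)
  end.

Definition chen_sum (w : nat -> R -> R) (c : R) (n : nat) (s x : R) : R :=
  sum_f_R0 (fun j => iint_rev w j c s * iint (shift w j) (n - j) c x) n.

Lemma iint_diag (w : nat -> R -> R) (m : nat) (s : R) : iint w (S m) s s = 0.
Proof. exact (RInt_point s _). Qed.

Lemma iint_rev_diag (w : nat -> R -> R) (m : nat) (c : R) : iint_rev w (S m) c c = 0.
Proof. exact (RInt_point c _). Qed.

Lemma chen_sum_dx (w : nat -> R -> R) (c : R) (m : nat) (s x : R) :
  sum_f_R0 (fun j => iint_rev w j c s * iint_dx (shift w j) (S m - j) c x) (S m)
  = w m x * chen_sum w c m s x.
Proof.
  rewrite tech5, Nat.sub_diag, Rmult_0_r, Rplus_0_r.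
  unfold chen_sum. rewrite scal_sum. apply sum_eq. intros j Hj.
  rewrite (Nat.sub_succ_l j m Hj). unfold iint_dx, shift.
  replace (j + (m - j))%nat with m by lia. ring.
Qed.

Lemma chen_sum_ds (w : nat -> R -> R) (c : R) (m : nat) (s x : R) :
  sum_f_R0 (fun j => iint_rev_ds w j c s * iint (shift w j) (S m - j) c x) (S m)
  = - w O s * chen_sum (shift w 1) c m s x.
Proof.
  rewrite decomp_sum by lia. cbn [pred iint_rev_ds]. rewrite Rmult_0_l, Rplus_0_l.
  unfold chen_sum. rewrite scal_sum. apply sum_eq. intros j _.
  cbn [iint_rev_ds Nat.sub]. change (shift w (S j)) with (shift (shift w 1) j). ring.
Qed.

Lemma chen_sum_base (w : nat -> R -> R) (c : R) (m : nat) : chen_sum w c (S m) c c = 0.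
Proof.
  apply sum_eq_R0. intros [| j] _.
  - rewrite Nat.sub_0_r, iint_diag. ring.
  - rewrite iint_rev_diag. ring.
Qed.

Lemma iint_cont (w : nat -> R -> R) (n : nat) (s : R) : (forall k, cont_on a b (w k)) ->
  a <= s <= b -> cont_on a b (iint w n s).
Proof.
  intros Hw Hs. induction n as [| m IH]; [apply cont_on_const |].
  apply cont_on_of_deriv. intros x Hx. eexists.
  apply is_deriv_on_RInt; [apply cont_on_mult; [exact IH | apply Hw] | exact Hs | exact Hx].
Qed.

Lemma is_deriv_on_iint (w : nat -> R -> R) (n : nat) (s x : R) : (forall k, cont_on a b (w k)) ->
  a <= s <= b -> a <= x <= b -> is_deriv_on a b (iint w n s) x (iint_dx w n s x).
Proof.
  intros Hw Hs Hx. destruct n as [| m]; [apply is_deriv_on_const |].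
  apply is_deriv_on_RInt; [apply cont_on_mult; [apply iint_cont | apply Hw] | |]; assumption.
Qed.

Lemma iint_rev_cont (w : nat -> R -> R) (n : nat) (c : R) : (forall k, cont_on a b (w k)) ->
  a <= c <= b -> cont_on a b (iint_rev w n c).
Proof.
  revert w. induction n as [| m IH]; intros w Hw Hc; [apply cont_on_const |].
  apply cont_on_of_deriv. intros s Hs. eexists.
  apply is_deriv_on_RInt_lower; [| exact Hc | exact Hs].
  apply cont_on_mult; [apply Hw | apply IH; [intros k; apply Hw | exact Hc]].
Qed.

Lemma is_deriv_on_iint_rev (w : nat -> R -> R) (n : nat) (c s : R) :
  (forall k, cont_on a b (w k)) ->
  a <= c <= b -> a <= s <= b -> is_deriv_on a b (iint_rev w n c) s (iint_rev_ds w n c s).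
Proof.
  intros Hw Hc Hs. destruct n as [| m]; [apply is_deriv_on_const |].
  apply is_deriv_on_RInt_lower; [| exact Hc | exact Hs].
  apply cont_on_mult; [apply Hw | apply iint_rev_cont; [intros k; apply Hw | exact Hc]].
Qed.

Lemma is_deriv_on_chen_sum_x (w : nat -> R -> R) (c : R) (m : nat) (s x : R) :
  (forall k, cont_on a b (w k)) -> a <= c <= b -> a <= x <= b ->
  is_deriv_on a b (chen_sum w c (S m) s) x (w m x * chen_sum w c m s x).
Proof.
  intros Hw Hc Hx. rewrite <- chen_sum_dx.
  apply (is_deriv_on_sum (fun j y => iint_rev w j c s * iint (shift w j) (S m - j) c y)).
  intros j _. apply is_deriv_on_scal, is_deriv_on_iint; [intros k; apply Hw | exact Hc | exact Hx].
Qed.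

Lemma is_deriv_on_chen_sum_s (w : nat -> R -> R) (c : R) (m : nat) (s x : R) :
  (forall k, cont_on a b (w k)) -> a <= c <= b -> a <= s <= b ->
  is_deriv_on a b (fun y => chen_sum w c (S m) y x) s (- w O s * chen_sum (shift w 1) c m s x).
Proof.
  intros Hw Hc Hs. rewrite <- chen_sum_ds.
  apply (is_deriv_on_sum (fun j y => iint_rev w j c y * iint (shift w j) (S m - j) c x)).
  intros j _.
  apply (is_deriv_on_eq _ _
    (iint_rev_ds w j c s * iint (shift w j) (S m - j) c x + iint_rev w j c s * 0)); [| ring].
  apply (is_deriv_on_mult (iint_rev w j c) (fun _ => iint (shift w j) (S m - j) c x));
    [apply is_deriv_on_iint_rev; assumption | apply is_deriv_on_const].
Qed.

Lemma is_deriv_on_chen_sum_diag (w : nat -> R -> R) (c : R) (m : nat) (s : R) :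
  (forall k, cont_on a b (w k)) -> a <= c <= b -> a <= s <= b ->
  is_deriv_on a b (fun y => chen_sum w c (S m) y y) s
    (- w O s * chen_sum (shift w 1) c m s s + w m s * chen_sum w c m s s).
Proof.
  intros Hw Hc Hs. rewrite <- chen_sum_ds, <- chen_sum_dx, <- plus_sum.
  apply (is_deriv_on_sum (fun j y => iint_rev w j c y * iint (shift w j) (S m - j) c y)).
  intros j _. apply is_deriv_on_mult; [apply is_deriv_on_iint_rev | apply is_deriv_on_iint];
    solve [intros k; apply Hw | assumption].
Qed.

Lemma chen_sum_diag (c : R) (m : nat) : a <= c <= b ->
  forall (w : nat -> R -> R) (s : R), (forall k, cont_on a b (w k)) ->
  a <= s <= b -> chen_sum w c (S m) s s = 0.
Proof.
  intros Hc. induction m as [| m IH]; intros w s Hw Hs.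
  - rewrite <- (chen_sum_base w c 0).
    apply (is_deriv_on_zero_const (fun y => chen_sum w c 1 y y)); [| assumption | assumption].
    intros y Hy. eapply is_deriv_on_eq; [apply is_deriv_on_chen_sum_diag; assumption |].
    unfold chen_sum. cbn. ring.
  - rewrite <- (chen_sum_base w c (S m)).
    apply (is_deriv_on_zero_const (fun y => chen_sum w c (S (S m)) y y));
      [| assumption | assumption].
    intros y Hy. eapply is_deriv_on_eq; [apply is_deriv_on_chen_sum_diag; assumption |].
    rewrite !IH by (try intros k; try apply Hw; assumption). ring.
Qed.

Lemma iint_chen (w : nat -> R -> R) (c : R) (n : nat) (s x : R) :
  (forall k, cont_on a b (w k)) -> a <= c <= b -> a <= s <= b -> a <= x <= b ->
  iint w n s x = chen_sum w c n s x.
Proof.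
  intros Hw Hc Hs. revert x. induction n as [| m IH]; intros x Hx.
  - unfold chen_sum. cbn. ring.
  - assert (E : iint w (S m) s x - chen_sum w c (S m) s x
               = iint w (S m) s s - chen_sum w c (S m) s s).
    { apply (is_deriv_on_zero_const (fun y => iint w (S m) s y - chen_sum w c (S m) s y));
        [| assumption | assumption].
      intros y Hy.
      apply (is_deriv_on_eq _ _ (iint_dx w (S m) s y + - (w m y * chen_sum w c m s y))).
      - apply is_deriv_on_plus;
          [apply is_deriv_on_iint | apply is_deriv_on_opp, is_deriv_on_chen_sum_x];
          assumption.
      - cbn [iint_dx]. rewrite IH by exact Hy. ring. }
    rewrite iint_diag, chen_sum_diag in E by assumption. lra.
Qed.

Lemma is_deriv_on_iint_lower (w : nat -> R -> R) (m : nat) (s x : R) :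
  (forall k, cont_on a b (w k)) -> a <= s <= b -> a <= x <= b ->
  is_deriv_on a b (fun y => iint w (S m) y x) s (- (w O s * iint (shift w 1) m s x)).
Proof.
  intros Hw Hs Hx. assert (Ha : a <= a <= b) by lra.
  apply (is_deriv_on_ext (fun y => chen_sum w a (S m) y x)); [exact Hs | |].
  - intros y Hy. symmetry. apply iint_chen; assumption.
  - rewrite (iint_chen (shift w 1) a) by (try intros k; try apply Hw; assumption).
    apply (is_deriv_on_eq _ _ _ _ (is_deriv_on_chen_sum_s w a m s x Hw Ha Hs)). ring.
Qed.

Lemma iint_cont_lower (w : nat -> R -> R) (n : nat) (x : R) : (forall k, cont_on a b (w k)) ->
  a <= x <= b -> cont_on a b (fun s => iint w n s x).
Proof.
  intros Hw Hx. destruct n as [| m]; [exact (cont_on_const 1) |].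
  apply cont_on_of_deriv. intros s Hs. eexists. apply is_deriv_on_iint_lower; assumption.
Qed.

Lemma iint_scaled (F : nat -> R -> R -> R) (w : nat -> R -> R) : (forall k, cont_on a b (w k)) ->
  (forall s x, F O s x = 1) ->
  (forall m s x, F (S m) s x = INR (S m) * RInt (fun y => F m s y * w m y) s x) ->
  forall n s x, a <= s <= b -> a <= x <= b -> F n s x = INR (fact n) * iint w n s x.
Proof.
  intros Hw HF0 HFS n s x Hs. revert x. induction n as [| m IH]; intros x Hx.
  - rewrite HF0. cbn [fact INR iint]. ring.
  - rewrite HFS, (RInt_ext _ (fun y => INR (fact m) * (iint w m s y * w m y))).
    + rewrite RInt_Rmult_l
        by (apply ex_RInt_on; [apply cont_on_mult; [apply iint_cont | apply Hw] | |]; assumption).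
      rewrite fact_simpl, mult_INR. cbn [iint]. ring.
    + intros y Hy. rewrite IH by (apply (seg_between s x); [assumption | assumption | lra]).
      apply Rmult_assoc.
Qed.

(** * Phi-power functions *)

(* Defined by swapping rather than by parity, so that [shift (Yweights Phi (S n)) 1] is
   convertible to [Yweights Phi n] and [Yweights Phi (S n) 0] to [phipow Phi n]. *)
Fixpoint alternate (p q : R -> R) (k : nat) : R -> R :=
  match k with
  | O => p
  | S k => alternate q p k
  end.

Definition Yweights (Phi : R -> R) (n : nat) : nat -> R -> R :=
  alternate (phipow Phi (S n)) (phipow Phi n).

Lemma alternate_even (p q : R -> R) (k : nat) : alternate p q k = if Nat.even k then p else q.
Proof.
  revert p q. induction k as [| k IH]; intros p q; [reflexivity |].
  cbn [alternate]. rewrite IH, Nat.even_succ, <- Nat.negb_even. destruct (Nat.even k); reflexivity.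
Qed.

Section phi_powers.

Variable Phi : R -> R.
Hypothesis Phi_cont : cont_on a b Phi.
Hypothesis Phi_nz : forall y, a <= y <= b -> Phi y <> 0.

Lemma cont_on_phipow (k : nat) : cont_on a b (phipow Phi k).
Proof.
  unfold phipow. destruct (Nat.even k); [exact Phi_cont | exact (cont_on_inv Phi Phi_nz Phi_cont)].
Qed.

Lemma cont_on_Yweights (n k : nat) : cont_on a b (Yweights Phi n k).
Proof. unfold Yweights. rewrite alternate_even. destruct (Nat.even k); apply cont_on_phipow. Qed.

Lemma is_deriv_on_iint_Yweights_lower (m : nat) (s x : R) : a <= s <= b -> a <= x <= b ->
  is_deriv_on a b (fun y => iint (Yweights Phi (S m)) (S m) y x) s
    (- (phipow Phi m s * iint (Yweights Phi m) m s x)).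
Proof. exact (is_deriv_on_iint_lower _ m s x (cont_on_Yweights (S m))). Qed.

Lemma Ypow_iint (k : nat) (s x : R) : a <= s <= b -> a <= x <= b ->
  Ypow Phi k s x = INR (fact k) * iint (Yweights Phi k) k s x.
Proof.
  transitivity ((if Nat.odd k then Xtpow Phi k else Xpow Phi k) s x);
    [unfold Ypow; destruct (Nat.odd k); reflexivity |].
  apply (iint_scaled (fun m => if Nat.odd k then Xtpow Phi m else Xpow Phi m));
    [apply cont_on_Yweights | intros; destruct (Nat.odd k); reflexivity | | assumption..].
  intros m s' x'. destruct (Nat.odd k) eqn:Hk; cbn [Xpow Xtpow]; f_equal;
    apply RInt_ext; intros y _; f_equal;
    unfold Yweights, phipow; rewrite alternate_even, !Nat.even_succ, <- !Nat.negb_odd, Hk;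
    destruct (Nat.odd m); reflexivity.
Qed.

Lemma Ck_on_Phi_of_Ypow (n : nat) (x0 : R) : a <= x0 <= b ->
  Ck_on a b (S n) (Ypow Phi 1 x0) -> Ck_on a b n Phi.
Proof.
  intros Hx0 HY.
  apply (Ck_on_ext n (deriv_on a b (Ypow Phi 1 x0))); [| exact (Ck_on_deriv_on _ _ HY)].
  intros y Hy. apply deriv_on_unique; [exact Hy |].
  apply (is_deriv_on_ext (fun z => INR (fact 1) * iint (Yweights Phi 1) 1 x0 z)); [exact Hy | |].
  - intros z Hz. symmetry. apply Ypow_iint; assumption.
  - eapply is_deriv_on_eq.
    + apply is_deriv_on_scal, is_deriv_on_iint; [exact (cont_on_Yweights 1) | exact Hx0 | exact Hy].
    + cbn [fact Nat.mul Nat.add INR iint iint_dx Yweights alternate phipow Nat.even]. ring.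
Qed.

(** * The Taylor formula *)

Lemma phipow_mul_S (k : nat) (y : R) : Phi y <> 0 ->
  phipow Phi k y * phipow Phi (S k) y = 1.
Proof.
  intros Hy. unfold phipow. rewrite Nat.even_succ, <- Nat.negb_even.
  destruct (Nat.even k); cbn; field; exact Hy.
Qed.

Lemma calD_S (h : R -> R) (k : nat) (y : R) :
  calD a b Phi (S k) h y = phipow Phi (S k) y * deriv_on a b (calD a b Phi k h) y.
Proof.
  unfold calD, Dk_tilde, Dk_plain, phipow. cbn [DDpair fst snd]. unfold Dphi, Dtphi.
  rewrite Nat.odd_succ, Nat.even_succ, <- Nat.negb_odd.
  destruct (Nat.odd k); cbn; unfold Rdiv; ring.
Qed.

Section taylor.

Variables (f : R -> R) (n : nat).
Hypothesis Phi_Cn : Ck_on a b n Phi.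
Hypothesis f_CSn : Ck_on a b (S n) f.

Lemma Ck_on_phipow (k : nat) : Ck_on a b n (phipow Phi k).
Proof.
  unfold phipow. destruct (Nat.even k); [exact Phi_Cn | exact (Ck_on_inv n Phi Phi_nz Phi_Cn)].
Qed.

Lemma Ck_on_calD (k : nat) : (k <= S n)%nat -> Ck_on a b (S n - k) (calD a b Phi k f).
Proof.
  induction k as [| k IH]; intros Hk; [rewrite Nat.sub_0_r; exact f_CSn |].
  apply (Ck_on_ext _ (fun y => phipow Phi (S k) y * deriv_on a b (calD a b Phi k f) y));
    [intros y _; symmetry; apply calD_S |].
  replace (S n - S k)%nat with (n - k)%nat by lia.
  apply Ck_on_mult; [apply (Ck_on_le _ n); [lia | apply Ck_on_phipow] |].
  apply Ck_on_deriv_on. rewrite <- Nat.sub_succ_l by lia. apply IH. lia.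
Qed.

Lemma is_deriv_on_calD (k : nat) (y : R) : (k <= n)%nat -> a <= y <= b ->
  is_deriv_on a b (calD a b Phi k f) y (phipow Phi k y * calD a b Phi (S k) f y).
Proof.
  intros Hk Hy. eapply is_deriv_on_eq.
  - apply (Ck_on_is_deriv_on (n - k)); [exact Hy |].
    rewrite <- Nat.sub_succ_l by exact Hk. apply Ck_on_calD. lia.
  - rewrite calD_S, <- Rmult_assoc, phipow_mul_S by auto. ring.
Qed.

Definition taylor_sum (x : R) (N : nat) (xi : R) : R :=
  sum_f_R0 (fun k => calD a b Phi k f xi * iint (Yweights Phi k) k xi x) N.

Lemma is_deriv_on_taylor_sum (x : R) (N : nat) (xi : R) :
  (N <= n)%nat -> a <= x <= b -> a <= xi <= b ->
  is_deriv_on a b (taylor_sum x N) xi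
    (phipow Phi N xi * calD a b Phi (S N) f xi * iint (Yweights Phi N) N xi x).
Proof.
  intros HN Hx Hxi. induction N as [| N IH]; unfold taylor_sum; cbn [sum_f_R0].
  - eapply is_deriv_on_eq.
    + apply (is_deriv_on_mult _ (fun _ => 1));
        [apply is_deriv_on_calD; [lia | exact Hxi] | apply is_deriv_on_const].
    + cbn [iint]. ring.
  - eapply is_deriv_on_eq.
    + apply is_deriv_on_plus; [apply IH; lia |].
      apply is_deriv_on_mult; [apply is_deriv_on_calD; [exact HN | exact Hxi] |].
      apply is_deriv_on_iint_Yweights_lower; assumption.
    + cbv beta. ring.
Qed.

Lemma taylor_sum_at_x (x : R) (N : nat) : taylor_sum x N x = f x.
Proof.
  induction N as [| N IH]; unfold taylor_sum in *; cbn [sum_f_R0].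
  - cbn [calD Dk_plain DDpair fst Nat.odd Nat.even negb iint]. ring.
  - rewrite IH, iint_diag. ring.
Qed.

Lemma taylor_sum_at_x0 (x0 x : R) : a <= x0 <= b -> a <= x <= b ->
  taylor_sum x n x0 = sum_f_R0 (fun k => calD a b Phi k f x0 / INR (fact k) * Ypow Phi k x0 x) n.
Proof.
  intros Hx0 Hx. apply sum_eq. intros k _. rewrite Ypow_iint by assumption.
  field. apply INR_fact_neq_0.
Qed.

Lemma cont_on_taylor_remainder (x : R) : a <= x <= b ->
  cont_on a b (fun xi => phipow Phi n xi * calD a b Phi (S n) f xi * iint (Yweights Phi n) n xi x).
Proof.
  intros Hx. apply cont_on_mult; [apply cont_on_mult |].
  - apply cont_on_phipow.
  - apply (Ck_on_cont (S n - S n)), Ck_on_calD. lia.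
  - apply iint_cont_lower; [apply cont_on_Yweights | exact Hx].
Qed.

Lemma Rem_taylor (x0 x : R) : a <= x0 <= b -> a <= x <= b ->
  Rem a b Phi f n x0 x =
  RInt (fun xi => phipow Phi n xi * calD a b Phi (S n) f xi * iint (Yweights Phi n) n xi x) x0 x.
Proof.
  intros Hx0 Hx.
  assert (E : forall xi, a <= xi <= b ->
    phipow Phi n xi * Ypow Phi n xi x * calD a b Phi (S n) f xi =
    INR (fact n) * (phipow Phi n xi * calD a b Phi (S n) f xi * iint (Yweights Phi n) n xi x)).
  { intros xi Hxi. rewrite Ypow_iint by assumption. ring. }
  unfold Rem.
  erewrite RInt_ext
    by (intros xi Hxi; apply E, (seg_between x0 x); [assumption | assumption | lra]).
  rewrite RInt_Rmult_l; [field; apply INR_fact_neq_0 |].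
  apply ex_RInt_on; [apply cont_on_taylor_remainder | |]; assumption.
Qed.

Lemma taylor_formula (x0 x : R) : a <= x0 <= b -> a <= x <= b ->
  f x = sum_f_R0 (fun k => calD a b Phi k f x0 / INR (fact k) * Ypow Phi k x0 x) n
        + Rem a b Phi f n x0 x.
Proof.
  intros Hx0 Hx. rewrite Rem_taylor by assumption.
  rewrite (RInt_deriv_on (taylor_sum x n));
    [| | apply cont_on_taylor_remainder | |]; try assumption.
  - rewrite taylor_sum_at_x, taylor_sum_at_x0 by assumption. ring.
  - intros y Hy. apply is_deriv_on_taylor_sum; [lia | assumption | assumption].
Qed.

End taylor.

End phi_powers.

End segment.

Lemma Ypow_diag (Phi : R -> R) (m : nat) (s : R) : Ypow Phi (S m) s s = 0.
Proof.
  unfold Ypow. destruct (Nat.odd (S m)); cbn [Xpow Xtpow]; rewrite RInt_point; apply Rmult_0_r.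
Qed.

Lemma taylor_formula_point (a b : R) (Phi f : R -> R) (n : nat) (x0 : R) :
  f x0 = sum_f_R0 (fun k => calD a b Phi k f x0 / INR (fact k) * Ypow Phi k x0 x0) n
         + Rem a b Phi f n x0 x0.
Proof.
  unfold Rem. rewrite RInt_point. change zero with 0. rewrite Rmult_0_r, Rplus_0_r.
  induction n as [| n IH]; cbn [sum_f_R0].
  - cbn [calD Dk_plain DDpair fst Nat.odd Nat.even negb fact INR Ypow Xpow]. field.
  - rewrite <- IH, Ypow_diag. ring.
Qed.

Theorem theorem5 (a b : R) (Phi f : R -> R) (x0 : R) (n : nat) :
  cont_on a b Phi ->
  (forall x, a <= x <= b -> Phi x <> 0) ->
  a <= x0 <= b ->
  Ck_on a b (S n) f ->
  (forall k, (k <= n)%nat -> Ck_on a b (S n) (Ypow Phi k x0)) ->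
  forall x, a <= x <= b ->
    f x = sum_f_R0 (fun k => calD a b Phi k f x0 / INR (fact k) * Ypow Phi k x0 x) n
          + Rem a b Phi f n x0 x.
Proof.
  intros Phi_cont Phi_nz Hx0 f_CSn HY x Hx.
  destruct (Rlt_or_le a b) as [Hab | Hba].
  - assert (Phi_Cn : Ck_on a b n Phi).
    { destruct n as [| m]; [exact Phi_cont |].
      apply (Ck_on_Phi_of_Ypow a b Hab Phi Phi_cont Phi_nz _ x0 Hx0), HY. lia. }
    exact (taylor_formula a b Hab Phi Phi_cont Phi_nz f n Phi_Cn f_CSn x0 x Hx0 Hx).
  - assert (x = x0) as -> by lra. apply taylor_formula_point.
Qed.
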